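(* Let $k$ be a finite field, $n\ge1$, and $F=T_0G_1+G_0\in k[T_0,\dots,T_n]$ nonzero homogeneous with $G_0,G_1\in k[T_1,\dots,T_n]$ homogeneous and $G_1\ne0$. Then there is a natural bijection \[ X_F(k)=\mathrm{Cone}_p(X_{G_1}\cap X_{G_0})(k)\ \sqcup\ \bigl(\mathbb{P}^{n-1}_k(k)-X_{G_1}(k)\bigr). \]
   Context: $X_F=\mathrm{Proj}\,k[T_0,\dots,T_n]/(F)$, $X_{G_1}=\mathrm{Proj}\,k[T_1,\dots,T_n]/(G_1)\subseteq\mathbb{P}^{n-1}_k=\mathrm{Proj}\,k[T_1,\dots,T_n]$, and $X_{G_1}\cap X_{G_0}=\mathrm{Proj}\,k[T_1,\dots,T_n]/(G_1,G_0)$. For $X=\mathrm{Proj}\,k[T_1,\dots,T_n]/I$, the projective cone with vertex $p=[1:0:\dots:0]$ is $\mathrm{Cone}_p(X)=\mathrm{Proj}\,k[T_0,T_1,\dots,T_n]/I\,k[T_0,\dots,T_n]$. $Y(k)$ denotes the set of $k$-rational points of $Y$. *)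

From HB Require Import structures.
From mathcomp Require Import all_boot all_order all_algebra all_field.
From mathcomp Require Import mpoly.
Set Implicit Arguments. Unset Strict Implicit. Unset Printing Implicit Defensive.
Import Order.TTheory GRing.Theory.
Local Open Scope ring_scope.

Section Proj.
Variable k : fieldType.

(* A vector of k^m is normalized if its first nonzero coordinate equals 1.
   Normalized vectors are the canonical representatives of the points of
   P^{m-1}(k) = (k^m - 0)/k^*. *)
Definition normalized m (x : {ffun 'I_m -> k}) : bool :=
  [exists i : 'I_m, (x i == 1) && [forall j : 'I_m, (j < i)%N ==> (x j == 0)]].

Definition proj_pts m := {x : {ffun 'I_m -> k} | normalized x}.

(* Vanishing of a polynomial at a point (well defined for homogeneous
   polynomials, since the representative is fixed). *)
Definition vanishes m (P : {mpoly k[m]}) (x : proj_pts m) : bool :=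
  P.@[fun i => val x i] == 0.

Definition tailv n (x : proj_pts n.+1) : 'I_n -> k :=
  fun i => val x (lift ord0 i).

(* The inclusion k[T_1,...,T_n] -> k[T_0,...,T_n], T_i |-> T_i
   (variable i of {mpoly k[n]} is sent to variable (lift ord0 i) = i+1). *)
Definition shift_mpoly n (G : {mpoly k[n]}) : {mpoly k[n.+1]} :=
  mmap (@mpolyC n.+1 k) (fun i => 'X_(lift ord0 i)) G.

Definition XF_pts n (F : {mpoly k[n.+1]}) := {x : proj_pts n.+1 | vanishes F x}.

(* Cone_p(X)(k), for X = Proj k[T_1..T_n]/I with I generated by the finite
   list Is of homogeneous polynomials: points of P^n_k whose last n
   coordinates are a zero of every generator. *)
Definition cone_pts n (Is : seq {mpoly k[n]}) :=
  {x : proj_pts n.+1 | all (fun G => G.@[tailv x] == 0) Is}.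

Definition compl_pts n (G : {mpoly k[n]}) := {y : proj_pts n | ~~ vanishes G y}.

End Proj.

From HB Require Import structures.
From mathcomp Require Import all_boot all_order all_algebra all_field.
From mathcomp Require Import mpoly.
Set Implicit Arguments. Unset Strict Implicit. Unset Printing Implicit Defensive.
Import GRing.Theory.
Local Open Scope ring_scope.

(* Write a point of P^n as (x_0 : t) with t in k^n.  On X_F we have
   x_0 G1(t) + G0(t) = 0.  If G1(t) = 0 then G0(t) = 0 as well and the point
   lies on the cone.  Otherwise t is nonzero (by homogeneity of F), x_0 is
   forced to be -G0(t)/G1(t), and the point is determined by the class of t,
   which ranges over P^{n-1} - X_{G1}; conversely every such class lifts to
   exactly one point of X_F. *)

Section Normalization.
Variables (k : fieldType) (m : nat).
Implicit Types (u v : {ffun 'I_m -> k}) (c : k) (i j : 'I_m).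

Definition first_nonzero v i : bool :=
  (v i != 0) && [forall j : 'I_m, (j < i)%N ==> (v j == 0)].

Lemma first_nonzero_uniq v i j : first_nonzero v i -> first_nonzero v j -> i = j.
Proof.
move=> /andP[vi /forallP vi_first] /andP[vj /forallP vj_first].
case: (ltngtP i j) => [ij | ji | /val_inj //].
- by move: vi; have /implyP/(_ ij) -> := vj_first i.
- by move: vj; have /implyP/(_ ji) -> := vi_first j.
Qed.

Lemma first_nonzero_exists v : v != 0 -> exists i, first_nonzero v i.
Proof.
move=> v_neq0; have [i vi] : exists i, v i != 0.
  apply/existsP; apply: contraR v_neq0 => /existsPn v0.
  by apply/eqP/ffunP => i; rewrite ffunE; apply/eqP/negbNE.
have [j vj j_min] := @arg_minnP _ i (fun j => v j != 0) val vi.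
exists j; rewrite /first_nonzero vj; apply/forallP => l; apply/implyP => lj.
by apply: contraLR lj => vl; rewrite -leqNgt j_min.
Qed.

Lemma first_nonzeroZ c v i :
  c != 0 -> first_nonzero [ffun j => c * v j] i = first_nonzero v i.
Proof.
move=> c_neq0; rewrite /first_nonzero ffunE mulf_eq0 (negbTE c_neq0).
by congr (_ && _); apply: eq_forallb => j; rewrite ffunE mulf_eq0 (negbTE c_neq0).
Qed.

Lemma normalizedE u : normalized u = [exists i, first_nonzero u i && (u i == 1)].
Proof.
apply: eq_existsb => i; rewrite /first_nonzero.
by case: (u i =P 1) => [-> | _]; rewrite ?oner_eq0 /= ?andbT ?andbF.
Qed.

(* The junk value 0 for v = 0 makes [lead_coord_eq0] an equivalence. *)
Definition lead_coord v : k :=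
  if [pick i | first_nonzero v i] is Some i then v i else 0.

Lemma lead_coordE v i : first_nonzero v i -> lead_coord v = v i.
Proof.
rewrite /lead_coord => vi; case: pickP => [j vj | /(_ i)]; last by rewrite vi.
by rewrite (first_nonzero_uniq vj vi).
Qed.

Lemma lead_coord_eq0 v : (lead_coord v == 0) = (v == 0).
Proof.
have [-> | /first_nonzero_exists[i vi]] := eqVneq v 0.
  by rewrite /lead_coord; case: pickP => [i /andP[] | _]; rewrite ?ffunE eqxx.
by rewrite (lead_coordE vi); case/andP: vi => /negbTE.
Qed.

Lemma lead_coordV_neq0 v : v != 0 -> (lead_coord v)^-1 != 0.
Proof. by rewrite invr_eq0 lead_coord_eq0. Qed.

Lemma lead_coordZ c v :
  c != 0 -> lead_coord [ffun j => c * v j] = c * lead_coord v.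
Proof.
move=> c_neq0; rewrite /lead_coord (eq_pick (fun i => first_nonzeroZ v i c_neq0)).
by case: pickP => [i _ | _]; rewrite ?ffunE ?mulr0.
Qed.

Lemma lead_coord_normalized u : normalized u -> lead_coord u = 1.
Proof. by rewrite normalizedE => /existsP[i /andP[/lead_coordE -> /eqP]]. Qed.

Lemma normalized_neq0 u : normalized u -> u != 0.
Proof. by rewrite -lead_coord_eq0 => /lead_coord_normalized ->; rewrite oner_eq0. Qed.

Definition normalize v : {ffun 'I_m -> k} := [ffun i => (lead_coord v)^-1 * v i].

Lemma normalizeZ c v : c != 0 -> normalize [ffun j => c * v j] = normalize v.
Proof.
move=> c_neq0; apply/ffunP => i; rewrite !ffunE lead_coordZ // invfM.
by rewrite mulrACA mulVf // mul1r.
Qed.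

Lemma normalize_id u : normalized u -> normalize u = u.
Proof.
by move/lead_coord_normalized => u1; apply/ffunP => i; rewrite ffunE u1 invr1 mul1r.
Qed.

Lemma normalized_normalize v : v != 0 -> normalized (normalize v).
Proof.
move=> /first_nonzero_exists[i vi]; rewrite normalizedE; apply/existsP; exists i.
have vi_neq0 : v i != 0 by case/andP: vi.
rewrite /normalize (lead_coordE vi) first_nonzeroZ ?invr_eq0 // vi /=.
by rewrite ffunE mulVf.
Qed.

Definition proj_pt v (v_neq0 : v != 0) : proj_pts k m :=
  exist _ (normalize v) (normalized_normalize v_neq0).

End Normalization.

Lemma meval_shift_mpoly (k : fieldType) n (G : {mpoly k[n]}) (w : 'I_n.+1 -> k) :
  (shift_mpoly G).@[w] = G.@[fun i => w (lift ord0 i)].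
Proof.
rewrite /shift_mpoly /mmap raddf_sum /= mevalE; apply: eq_bigr => m _.
rewrite mevalM mevalC rmorph_prod /=; congr (_ * _).
by apply: eq_bigr => i _; rewrite rmorphXn /= mevalXU.
Qed.

Lemma meval_dhomog (R : comNzRingType) n (P : {mpoly R[n]}) d c (w : 'I_n -> R) :
  P \is d.-homog -> P.@[fun i => c * w i] = c ^+ d * P.@[w].
Proof.
move=> /dhomogP P_homog; rewrite !mevalE mulr_sumr; apply: eq_big_seq => m /P_homog <-.
under eq_bigr do rewrite exprMn.
by rewrite big_split /= prodrXr mdegE mulrCA.
Qed.

Lemma meval_finfun (R : nzRingType) m (P : {mpoly R[m]}) (w : 'I_m -> R) :
  P.@[[ffun i => w i]] = P.@[w].
Proof. by apply: meval_eq => i; rewrite ffunE. Qed.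

Definition tailf (k : fieldType) n (v : {ffun 'I_n.+1 -> k}) : {ffun 'I_n -> k} :=
  [ffun i => v (lift ord0 i)].

Lemma meval_tailf (k : fieldType) n (P : {mpoly k[n]}) (v : {ffun 'I_n.+1 -> k}) :
  P.@[tailf v] = P.@[fun i => v (lift ord0 i)].
Proof. exact: meval_finfun. Qed.

Lemma meval_tailv (k : fieldType) n (P : {mpoly k[n]}) (x : proj_pts k n.+1) :
  P.@[tailv x] = P.@[tailf (val x)].
Proof. by rewrite meval_tailf. Qed.

Lemma tailf_normalize (k : fieldType) n (v : {ffun 'I_n.+1 -> k}) :
  tailf (normalize v) = [ffun i => (lead_coord v)^-1 * tailf v i].
Proof. by apply/ffunP => i; rewrite !ffunE. Qed.

Section Split.
Variables (k : fieldType) (n d d1 : nat) (F : {mpoly k[n.+1]}) (G0 G1 : {mpoly k[n]}).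
Hypotheses (F_homog : F \is d.-homog) (G1_homog : G1 \is d1.-homog).
Hypothesis F_def : F = 'X_ord0 * shift_mpoly G1 + shift_mpoly G0.
Implicit Types (v : {ffun 'I_n.+1 -> k}) (y : {ffun 'I_n -> k}).

Lemma meval_F (w : 'I_n.+1 -> k) :
  F.@[w] = w ord0 * G1.@[fun i => w (lift ord0 i)] + G0.@[fun i => w (lift ord0 i)].
Proof. by rewrite F_def mevalD mevalM mevalXU !meval_shift_mpoly. Qed.

Lemma meval_G1_scale_neq0 c (w : 'I_n -> k) :
  c != 0 -> G1.@[w] != 0 -> G1.@[fun i => c * w i] != 0.
Proof. by move=> c_neq0 G1w; rewrite (meval_dhomog _ _ G1_homog) mulf_neq0 ?expf_neq0. Qed.

(* G1 may be a nonzero constant, so G1.@[tailf v] != 0 alone does not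
   exclude tailf v = 0; the vanishing of F along the line through v does. *)
Lemma tailf_neq0 v : v != 0 -> F.@[v] = 0 -> G1.@[tailf v] != 0 -> tailf v != 0.
Proof.
move=> v_neq0 Fv; apply: contraNneq => tail0.
have tail_v (j : 'I_n) : v (lift ord0 j) = 0 by move/ffunP/(_ j): tail0; rewrite !ffunE.
have v0_neq0 : v ord0 != 0.
  apply: contraNneq v_neq0 => v0; apply/eqP/ffunP => i; rewrite ffunE.
  by case: (unliftP ord0 i) => [j -> | ->].
have F_line c : c * v ord0 * G1.@[fun _ => 0] + G0.@[fun _ => 0] = 0.
  have := meval_dhomog c v F_homog; rewrite Fv mulr0 meval_F /=.
  by rewrite !(@meval_eq _ _ _ (fun _ => 0)) // => j; rewrite tail_v mulr0.
have G0_0 := F_line 0; rewrite !mul0r add0r in G0_0.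
have := F_line 1; rewrite G0_0 addr0 mul1r => /eqP.
by rewrite mulf_eq0 (negbTE v0_neq0) meval_tailf (meval_eq _ tail_v).
Qed.

Definition XF_over y : {ffun 'I_n.+1 -> k} :=
  [ffun i => if unlift ord0 i is Some j then y j else - G0.@[y] / G1.@[y]].

Lemma tailf_XF_over y : tailf (XF_over y) = y.
Proof. by apply/ffunP => i; rewrite !ffunE liftK. Qed.

Lemma XF_over_neq0 y : y != 0 -> XF_over y != 0.
Proof.
apply: contraNneq => XF_over0; rewrite -(tailf_XF_over y) XF_over0.
by apply/eqP/ffunP => i; rewrite !ffunE.
Qed.

Lemma meval_F_XF_over y : G1.@[y] != 0 -> F.@[XF_over y] = 0.
Proof.
move=> G1y; rewrite meval_F -!(meval_tailf _ (XF_over y)) tailf_XF_over ffunE.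
by rewrite unlift_none divfK ?addNr.
Qed.

Lemma XF_over_scale c v : c != 0 -> F.@[v] = 0 -> G1.@[tailf v] != 0 ->
  XF_over [ffun i => c * tailf v i] = [ffun i => c * v i].
Proof.
move=> c_neq0 Fv G1v; apply/ffunP => i; rewrite !ffunE.
case: (unliftP ord0 i) => [j -> | ->]; first by rewrite !ffunE.
have scaled_tail : [ffun i => c * tailf v i] =1 (fun i => c * v (lift ord0 i)).
  by move=> j; rewrite !ffunE.
rewrite !(meval_eq _ scaled_tail).
have G1_neq0 : G1.@[fun i => c * v (lift ord0 i)] != 0.
  by apply: meval_G1_scale_neq0; move: G1v; rewrite meval_tailf.
have := meval_dhomog c v F_homog; rewrite Fv mulr0 meval_F => /eqP.
by rewrite addr_eq0 => /eqP <-; rewrite mulfK.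
Qed.

Lemma meval_XF_pts (x : XF_pts F) : F.@[val (val x)] = 0.
Proof. exact/eqP/(valP x). Qed.

Lemma tailf_XF_pts_neq0 (x : XF_pts F) :
  G1.@[tailv (val x)] != 0 -> tailf (val (val x)) != 0.
Proof.
rewrite meval_tailv; apply: tailf_neq0 (meval_XF_pts x).
exact: normalized_neq0 (valP (val x)).
Qed.

Lemma cone_of_XF_subproof (x : XF_pts F) : G1.@[tailv (val x)] = 0 ->
  all (fun G => G.@[tailv (val x)] == 0) [:: G1; G0].
Proof.
move=> G1x; have := meval_XF_pts x; rewrite meval_F G1x mulr0 add0r.
by rewrite /= G1x => ->; rewrite eqxx.
Qed.

Lemma compl_of_XF_subproof (x : XF_pts F) (G1x : G1.@[tailv (val x)] != 0) :
  G1.@[normalize (tailf (val (val x)))] != 0.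
Proof.
rewrite /normalize meval_finfun meval_G1_scale_neq0 //.
- exact/lead_coordV_neq0/tailf_XF_pts_neq0.
- by rewrite -meval_tailv.
Qed.

Definition cone_of_XF (x : XF_pts F) (G1x : G1.@[tailv (val x)] = 0) :
  cone_pts [:: G1; G0] := exist _ (val x) (cone_of_XF_subproof G1x).

Definition compl_of_XF (x : XF_pts F) (G1x : G1.@[tailv (val x)] != 0) :
  compl_pts G1 :=
  exist _ (proj_pt (tailf_XF_pts_neq0 G1x)) (compl_of_XF_subproof G1x).

Definition split_XF (x : XF_pts F) : cone_pts [:: G1; G0] + compl_pts G1 :=
  match eqVneq G1.@[tailv (val x)] 0 with
  | EqNotNeq G1x => inl (cone_of_XF G1x)
  | NeqNotEq G1x => inr (compl_of_XF G1x)
  end.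

Lemma XF_of_cone_subproof (c : cone_pts [:: G1; G0]) : vanishes F (val c).
Proof.
case/and3P: (valP c) => /eqP G1c /eqP G0c _.
by rewrite /vanishes meval_F G1c G0c mulr0 addr0.
Qed.

Lemma XF_over_compl_neq0 (y : compl_pts G1) : XF_over (val (val y)) != 0.
Proof. exact/XF_over_neq0/normalized_neq0/(valP (val y)). Qed.

Lemma XF_of_compl_subproof (y : compl_pts G1) :
  F.@[normalize (XF_over (val (val y)))] == 0.
Proof.
rewrite /normalize meval_finfun (meval_dhomog _ _ F_homog) meval_F_XF_over ?mulr0 //.
exact: (valP y).
Qed.

Definition XF_of_cone (c : cone_pts [:: G1; G0]) : XF_pts F :=
  exist _ (val c) (XF_of_cone_subproof c).

Definition XF_of_compl (y : compl_pts G1) : XF_pts F :=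
  exist _ (proj_pt (XF_over_compl_neq0 y)) (XF_of_compl_subproof y).

Definition merge_XF (r : cone_pts [:: G1; G0] + compl_pts G1) : XF_pts F :=
  match r with inl c => XF_of_cone c | inr y => XF_of_compl y end.

Lemma G1_tail_XF_of_compl_neq0 (y : compl_pts G1) :
  G1.@[tailv (val (XF_of_compl y))] != 0.
Proof.
rewrite meval_tailv /= tailf_normalize tailf_XF_over meval_finfun.
by rewrite meval_G1_scale_neq0 ?lead_coordV_neq0 ?XF_over_compl_neq0 //; exact: (valP y).
Qed.

Lemma split_XFK : cancel split_XF merge_XF.
Proof.
move=> x; rewrite /split_XF; case: eqVneq => G1x; apply/val_inj => //=.
apply/val_inj => /=; rewrite [X in XF_over X]/normalize XF_over_scale.
- by rewrite normalizeZ ?normalize_id ?lead_coordV_neq0 ?tailf_XF_pts_neq0 //; exact: valP.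
- exact/lead_coordV_neq0/tailf_XF_pts_neq0.
- exact: meval_XF_pts.
- by rewrite -meval_tailv.
Qed.

Lemma merge_XFK : cancel merge_XF split_XF.
Proof.
case=> [c | y]; rewrite /split_XF; case: eqVneq => G1x.
- by congr inl; apply/val_inj.
- by exfalso; case/andP: (valP c) => /eqP G1c _; move: G1x; rewrite /= G1c eqxx.
- by exfalso; move/eqP: G1x; apply/negP/G1_tail_XF_of_compl_neq0.
- congr inr; apply/val_inj/val_inj => /=.
  rewrite tailf_normalize tailf_XF_over normalizeZ ?normalize_id //; first exact: valP.
  exact/lead_coordV_neq0/XF_over_compl_neq0.
Qed.

Lemma split_XF_coords (x : XF_pts F) :
  match split_XF x with
  | inl c => val (val c) = val (val x)
  | inr y => exists a : k, a != 0 /\ forall i : 'I_n, val (val y) i = a * tailv (val x) i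
  end.
Proof.
rewrite /split_XF; case: eqVneq => G1x //=.
exists (lead_coord (tailf (val (val x))))^-1; split => [|i]; last by rewrite !ffunE.
exact/lead_coordV_neq0/tailf_XF_pts_neq0.
Qed.

End Split.

Theorem proposition5p5 (k : finFieldType) (n : nat) (n_ge1 : (1 <= n)%N)
    (F : {mpoly k[n.+1]}) (G0 G1 : {mpoly k[n]}) :
    F != 0 -> (exists d, F \is d.-homog) ->
    (exists d, G0 \is d.-homog) -> (exists d, G1 \is d.-homog) ->
    G1 != 0 ->
    F = 'X_ord0 * shift_mpoly G1 + shift_mpoly G0 ->
    exists f : XF_pts F -> cone_pts [:: G1; G0] + compl_pts G1,
      bijective f /\
      (forall x : XF_pts F,
        match f x with
        | inl c => val (val c) = val (val x)
        | inr y => exists a : k, a != 0 /\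
                     forall i : 'I_n, val (val y) i = a * tailv (val x) i
        end).
Proof.
move=> _ [d F_homog] _ [d1 G1_homog] _ F_def.
exists (split_XF F_homog G1_homog F_def); split; last exact: split_XF_coords.
exact: Bijective (split_XFK _ _ _) (merge_XFK _ _ _).
Qed.
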